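(* In the setting described in the context, let $\sigma_w,\sigma_v$ be real scalars and consider the system $$\tilde\Sigma_\tau(s)=R^T\big(sI+L_{e,s}^\tau RWR^T\big)^{-1}\begin{bmatrix}\sigma_wD_\tau^TE^{-1/2} & -\sigma_vL_{e,s}^\tau RW^{1/2}\end{bmatrix}.$$ Then $\|\tilde\Sigma_\tau\|_\infty^2=\bar\sigma(Z)$, where $$Z=\sigma_w^2R^T\big(RWR^TL_{e,s}^\tau RWR^T\big)^{-1}R+\sigma_v^2R^T\big(RWR^T\big)^{-1}R.$$
   Context: Let $\mathcal G$ be an undirected, connected graph without self-loops, with node set $\{1,\dots,n\}$ ($n\ge2$) and edge set $\mathcal E$, $m=|\mathcal E|$. Give each edge an arbitrary orientation; the incidence matrix $D\in\mathbb R^{n\times m}$ has $D_{il}=1$ if node $i$ is the initial node of edge $l$, $-1$ if it is the terminal node, and $0$ otherwise. Fix a spanning tree $\mathcal G_\tau$ and order the edges so the first $n-1$ are tree edges; write $D=[D_\tau\ D_c]$ with $D_\tau\in\mathbb R^{n\times(n-1)}$. Set $T_\tau^c=(D_\tau^TD_\tau)^{-1}D_\tau^TD_c$ and $R=[I_{n-1}\ T_\tau^c]\in\mathbb R^{(n-1)\times m}$. Let $W=\mathrm{diag}(w_1,\dots,w_m)$, $w_l>0$, and $E=\mathrm{diag}(\epsilon_1,\dots,\epsilon_n)$, $\epsilon_i>0$; $W^{1/2},E^{-1/2}$ are taken entrywise on the diagonal. Define $L_{e,s}^\tau=D_\tau^TE^{-1}D_\tau$. For a stable transfer matrix $\Phi(s)$,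 $\|\Phi\|_\infty=\sup_{\omega\in\mathbb R}\bar\sigma(\Phi(j\omega))$ where $\bar\sigma$ is the largest singular value. *)

From HB Require Import structures.
From mathcomp Require Import all_boot all_order all_algebra.
From mathcomp Require Import complex.
From mathcomp Require Import classical_sets reals.
Set Implicit Arguments.
Unset Strict Implicit.
Unset Printing Implicit Defensive.
Import Order.TTheory GRing.Theory Num.Theory.
Local Open Scope ring_scope.
Local Open Scope classical_set_scope.

(* ---------- Graph data ----------
   A graph on nodes 'I_n with m edges; edge l has (arbitrary) orientation
   src l -> dst l. *)
Definition no_self_loops (n m : nat) (src dst : 'I_m -> 'I_n) : Prop :=
  forall l, src l != dst l.

Definition distinct_edges (n m : nat) (src dst : 'I_m -> 'I_n) : Prop :=
  forall l l', l != l' ->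
    ~ ((src l = src l' /\ dst l = dst l') \/ (src l = dst l' /\ dst l = src l')).

Definition adj_in (n m : nat) (src dst : 'I_m -> 'I_n) (S : pred 'I_m) : rel 'I_n :=
  fun x y => [exists l, (l \in S) &&
                ((src l == x) && (dst l == y) || (src l == y) && (dst l == x))].

Definition connected_in (n m : nat) (src dst : 'I_m -> 'I_n) (S : pred 'I_m) : Prop :=
  forall x y : 'I_n, connect (adj_in src dst S) x y.

Definition spanning_tree (n m : nat) (src dst : 'I_m -> 'I_n) (S : pred 'I_m) : Prop :=
  connected_in src dst S /\ #|S| = n.-1.

Definition incidence (R : realType) (n m : nat) (src dst : 'I_m -> 'I_n) : 'M[R]_(n, m) :=
  \matrix_(i, l) ((i == src l)%:R - (i == dst l)%:R).

Definition conjT (R : realType) (p q : nat) (A : 'M[R[i]]_(p, q)) : 'M[R[i]]_(q, p) :=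
  (map_mx Num.conj A)^T.

(* largest singular value: square root of the largest eigenvalue of A^H A
   (these eigenvalues are real and nonnegative) *)
Definition sigma_max (R : realType) (p q : nat) (A : 'M[R[i]]_(p, q)) : R :=
  Num.sqrt (sup [set x : R | eigenvalue (conjT A *m A) (x%:C)%C]).

Definition sigma_max_real (R : realType) (p q : nat) (A : 'M[R]_(p, q)) : R :=
  sigma_max (map_mx (fun x : R => (x%:C)%C) A).

Definition hinf_norm (R : realType) (p q : nat) (Phi : R[i] -> 'M[R[i]]_(p, q)) : R :=
  sup [set sigma_max (Phi (0 +i* w)%C) | w in [set: R]].

(* ---------- The objects of the paper ----------
   n = k.+1 nodes, tree edges are the first k, then c cotree edges. *)
Section Objects.
Variables (R : realType) (k c : nat).
Variables (src dst : 'I_(k + c) -> 'I_k.+1).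
Variables (w : 'I_(k + c) -> R) (eps : 'I_k.+1 -> R).

Definition D : 'M[R]_(k.+1, k + c) := incidence R src dst.
Definition Dtau : 'M[R]_(k.+1, k) := lsubmx D.
Definition Dc : 'M[R]_(k.+1, c) := rsubmx D.
Definition Ttc : 'M[R]_(k, c) := invmx (Dtau^T *m Dtau) *m Dtau^T *m Dc.
Definition Rm : 'M[R]_(k, k + c) := row_mx 1%:M Ttc.
Definition Wm : 'M[R]_(k + c) := diag_mx (\row_l w l).
Definition Whalf : 'M[R]_(k + c) := diag_mx (\row_l Num.sqrt (w l)).
Definition Einv : 'M[R]_(k.+1) := diag_mx (\row_i (eps i)^-1).
Definition Einvhalf : 'M[R]_(k.+1) := diag_mx (\row_i (Num.sqrt (eps i))^-1).
Definition Les : 'M[R]_k := Dtau^T *m Einv *m Dtau.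

Definition toC (p q : nat) (A : 'M[R]_(p, q)) : 'M[R[i]]_(p, q) :=
  map_mx (fun x : R => (x%:C)%C) A.

Definition Sigma_tilde (sw sv : R) (s : R[i]) : 'M[R[i]]_(k + c, k.+1 + (k + c)) :=
  toC Rm^T *m invmx (s%:M + toC (Les *m Rm *m Wm *m Rm^T))
    *m row_mx (toC (sw *: (Dtau^T *m Einvhalf)))
              (toC (- (sv *: (Les *m Rm *m Whalf)))).

Definition Zm (sw sv : R) : 'M[R]_(k + c) :=
  sw ^+ 2 *: (Rm^T *m invmx (Rm *m Wm *m Rm^T *m Les *m Rm *m Wm *m Rm^T) *m Rm)
  + sv ^+ 2 *: (Rm^T *m invmx (Rm *m Wm *m Rm^T) *m Rm).
End Objects.

From HB Require Import structures.
From mathcomp Require Import all_boot all_order all_algebra.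
From mathcomp Require Import complex spectral.
From mathcomp Require Import classical_sets reals.
From mathcomp Require Import zify.
Import Order.TTheory GRing.Theory Num.Theory.
Local Open Scope ring_scope.
Set Implicit Arguments. Unset Strict Implicit. Unset Printing Implicit Defensive.

(* Write L := L_{e,s}^tau and Q := R W R^T; both are positive definite (L
   because the spanning tree gives D_tau full column rank).  Then
   Sigma(s) = R^T (s + M)^-1 B with M := L Q and B B^T = sw^2 L + sv^2 L Q L,
   and K := sw^2 Q^-1 L^-1 Q^-1 + sv^2 Q^-1 satisfies M K = K M^T and
   M K M^T = B B^T.  Hence (jw + M) K (jw + M)^* = B B^T + w^2 K, i.e.
     Z = R^T K R = Sigma(jw) Sigma(jw)^* + w^2 N(jw) N(jw)^*
   with N(jw) := R^T (jw + M)^-1 M^-1 B.  So Sigma(jw) Sigma(jw)^* <= Z in the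
   Loewner order, with equality at w = 0, and ||Sigma||_inf^2 = lambda_max(Z),
   which is sigma_max(Z) as Z = Sigma(0) Sigma(0)^* is positive semidefinite. *)

Lemma sup_max (R : realType) (E : set R) (a : R) :
  E a -> (forall x, E x -> x <= a) -> sup E = a.
Proof.
move=> Ea ub; apply/le_anti/andP; split.
  by apply: ge_sup; [exists a | move=> x /ub].
by apply: ub_le_sup => //; exists a => x /ub.
Qed.

(* [0 <= a] because [sup set0 = 0]. *)
Lemma sup_le (R : realType) (E : set R) (a : R) :
  0 <= a -> (forall x, E x -> x <= a) -> sup E <= a.
Proof.
move=> a0 ub; have [->|/set0P ne] := eqVneq E set0; first by rewrite sup0.
by apply: ge_sup => // x /ub.
Qed.

Lemma sup_nonneg_max (R : realType) (E : set R) (a : R) : 0 <= a ->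
  (forall x, E x -> 0 <= x <= a) -> (0 < a -> E a) -> sup E = a.
Proof.
move=> a0 bnd aE; have [a_gt0|a_le0] := ltP 0 a.
  by apply: sup_max (aE a_gt0) _ => x /bnd /andP[].
have {a_le0 a0 aE} a_eq0 : a = 0 by apply/le_anti; rewrite a_le0 a0.
rewrite {}a_eq0 in bnd *.
apply/le_anti/andP; split; first by apply: sup_le => // x /bnd /andP[].
have [->|/set0P[x Ex]] := eqVneq E set0; first by rewrite sup0.
have /andP[x_ge0 _] := bnd x Ex; apply: le_trans x_ge0 _.
by apply: ub_le_sup => //; exists 0 => y /bnd /andP[].
Qed.

Section ConjugateTranspose.
Variable R : realType.
Local Notation C := R[i].

Lemma conjT_mulmx p q r (A : 'M[C]_(p, q)) (B : 'M[C]_(q, r)) :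
  conjT (A *m B) = conjT B *m conjT A.
Proof. by rewrite /conjT map_mxM trmx_mul. Qed.

Lemma conjTK p q (A : 'M[C]_(p, q)) : conjT (conjT A) = A.
Proof. by apply/matrixP => i j; rewrite !mxE conjCK. Qed.

Lemma conjTD p q (A B : 'M[C]_(p, q)) : conjT (A + B) = conjT A + conjT B.
Proof. by apply/matrixP => i j; rewrite !mxE rmorphD. Qed.

Lemma conjT_scalar p (a : C) : conjT (a%:M : 'M[C]_p) = (Num.conj a)%:M.
Proof. by apply/matrixP => i j; rewrite !mxE eq_sym raddfMn. Qed.

Lemma conjT_gram p q (Y : 'M[C]_(p, q)) : conjT (Y *m conjT Y) = Y *m conjT Y.
Proof. by rewrite conjT_mulmx conjTK. Qed.

Lemma toC_mulmx p q r (A : 'M[R]_(p, q)) (B : 'M[R]_(q, r)) :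
  toC (A *m B) = toC A *m toC B.
Proof. exact: map_mxM. Qed.

Lemma conjT_toC p q (A : 'M[R]_(p, q)) : conjT (toC A) = toC A^T.
Proof. by apply/matrixP => i j; rewrite !mxE; exact: conjc_real. Qed.

Lemma toC_gram p q (Y : 'M[R]_(p, q)) : toC (Y *m Y^T) = toC Y *m conjT (toC Y).
Proof. by rewrite conjT_toC toC_mulmx. Qed.

Definition sqnorm p (u : 'rV[C]_p) : C := (u *m conjT u) 0 0.

Definition qform p (K : 'M[C]_p) (u : 'rV[C]_p) : C := (u *m K *m conjT u) 0 0.

Lemma sqnormE p (u : 'rV[C]_p) : sqnorm u = \sum_j u 0 j * Num.conj (u 0 j).
Proof. by rewrite /sqnorm mxE; apply: eq_bigr => j _; rewrite !mxE. Qed.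

Lemma sqnorm_ge0 p (u : 'rV[C]_p) : 0 <= sqnorm u.
Proof. by rewrite sqnormE; apply: sumr_ge0 => j _; exact: mul_conjC_ge0. Qed.

Lemma sqnorm_eq0 p (u : 'rV[C]_p) : (sqnorm u == 0) = (u == 0).
Proof.
apply/idP/eqP => [|->]; last by rewrite /sqnorm mul0mx mxE.
rewrite sqnormE psumr_eq0 => [/allP u0|j _]; last exact: mul_conjC_ge0.
apply/rowP => j; have /implyP := u0 j (mem_index_enum j).
by rewrite mxE mul_conjC_eq0 => /(_ isT) /eqP.
Qed.

Lemma sqnorm_gt0 p (u : 'rV[C]_p) : (0 < sqnorm u) = (u != 0).
Proof. by rewrite lt_def sqnorm_ge0 sqnorm_eq0 andbT. Qed.

Lemma qform_gram p q (Y : 'M[C]_(p, q)) (u : 'rV[C]_p) :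
  qform (Y *m conjT Y) u = sqnorm (u *m Y).
Proof. by rewrite /qform /sqnorm conjT_mulmx !mulmxA. Qed.

Lemma qform_eigen p (K : 'M[C]_p) (u : 'rV[C]_p) (a : C) :
  u *m K = a *: u -> qform K u = a * sqnorm u.
Proof. by move=> uK; rewrite /qform uK -scalemxAl mxE. Qed.

Lemma qformDZ p (K K' : 'M[C]_p) (a : C) (u : 'rV[C]_p) :
  qform (K + a *: K') u = qform K u + a * qform K' u.
Proof. by rewrite /qform mulmxDr mulmxDl -scalemxAr -scalemxAl !mxE. Qed.

Lemma qform_diag p (d : 'rV[C]_p) (u : 'rV[C]_p) :
  qform (diag_mx d) u = \sum_j d 0 j * (u 0 j * Num.conj (u 0 j)).
Proof.
rewrite /qform mxE; apply: eq_bigr => j _.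
by rewrite mul_mx_diag !mxE mulrA (mulrC (d 0 j)).
Qed.

Lemma qform_conj p (P D : 'M[C]_p) (u : 'rV[C]_p) :
  qform (conjT P *m D *m P) u = qform D (u *m conjT P).
Proof. by rewrite /qform conjT_mulmx conjTK !mulmxA. Qed.

Lemma ge0_complexE (x : C) : 0 <= x -> x = (complex.Re x)%:C%C.
Proof. by case: x => a b; rewrite lecE /= => /andP[/eqP -> _]. Qed.

End ConjugateTranspose.

Section GramSpectrum.
Variable R : realType.
Local Notation C := R[i].

Definition rayleigh_bound p (K : 'M[C]_p) (lam : R) : Prop :=
  forall u, qform K u <= lam%:C%C * sqnorm u.

Lemma gram_spectral n p (Y : 'M[C]_(n, p)) :
  exists (P : 'M[C]_n) (r : 'I_n -> R),
  [/\ P *m conjT P = 1%:M, conjT P *m P = 1%:M, forall j, 0 <= r j &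
      Y *m conjT Y = conjT P *m diag_mx (\row_j (r j)%:C%C) *m P].
Proof.
set K := Y *m conjT Y.
have /orthomx_spectralP KE : K \is normalmx.
  apply/normalmxP; suff -> : (K ^t*)%sesqui = K by [].
  apply/matrixP => i j; rewrite !mxE rmorph_sum; apply: eq_bigr => l _.
  by rewrite !mxE rmorphM /= conjCK mulrC.
set P := spectralmx K in KE; set d := spectral_diag K in KE.
have PPh : P *m conjT P = 1%:M.
  by have /unitarymxP := spectral_unitarymx K; rewrite /conjT map_trmx.
have {}KE : K = conjT P *m diag_mx d *m P.
  rewrite {1}KE; congr (_ *m _ *m _).
  by rewrite invmx_unitary ?spectral_unitarymx // /conjT map_trmx.
have d_ge0 j : 0 <= d 0 j.
  have := sqnorm_ge0 ((delta_mx 0 j : 'rV[C]_n) *m P *m Y).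
  rewrite -qform_gram -/K KE qform_conj -mulmxA PPh mulmx1 qform_diag.
  rewrite (bigD1 j) //= big1 ?addr0.
    by rewrite !mxE !eqxx mul1r conjC1 mulr1.
  by move=> i /negbTE ij; rewrite !mxE ij mul0r mulr0.
exists P, (fun j => complex.Re (d 0 j)); split => // [|j|].
- exact: mulmx1C.
- by rewrite -lecR -ge0_complexE.
- by rewrite KE; congr (_ *m diag_mx _ *m _); apply/rowP => j; rewrite mxE -ge0_complexE.
Qed.

Lemma gram_top_eigen n p (Y : 'M[C]_(n, p)) : (0 < n)%N ->
  exists lam : R, [/\ 0 <= lam, rayleigh_bound (Y *m conjT Y) lam &
    exists2 u : 'rV[C]_n, u != 0 & u *m (Y *m conjT Y) = lam%:C%C *: u].
Proof.
move=> n_gt0; have [P [r [PPh PhP r_ge0 KE]]] := gram_spectral Y.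
have sqnormPh u : sqnorm (u *m conjT P) = sqnorm u.
  by rewrite /sqnorm conjT_mulmx conjTK mulmxA -(mulmxA u) PhP mulmx1.
have ePPh j : (delta_mx 0 j : 'rV[C]_n) *m P *m conjT P = delta_mx 0 j.
  by rewrite -mulmxA PPh mulmx1.
have [jmax _ rmax] := @arg_maxP _ _ _ (Ordinal n_gt0) predT r isT.
exists (r jmax); split => // [u|].
  rewrite KE qform_conj qform_diag -sqnormPh sqnormE mulr_sumr.
  apply: ler_sum => j _; apply: ler_wpM2r; first exact: mul_conjC_ge0.
  by rewrite mxE lecR; apply: rmax.
exists ((delta_mx 0 jmax : 'rV[C]_n) *m P).
  apply: contra_neq (oner_neq0 C) => P0.
  by have /rowP /(_ jmax) := ePPh jmax; rewrite P0 mul0mx !mxE !eqxx => ->.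
by rewrite KE !mulmxA ePPh -rowE row_diag_mx mxE scalemxAl.
Qed.

End GramSpectrum.

Section SigmaMax.
Variable R : realType.
Local Notation C := R[i].

Lemma eigen_gram_ge0 p q (A : 'M[C]_(p, q)) (x : R) :
  eigenvalue (conjT A *m A) x%:C%C -> 0 <= x.
Proof.
move=> /eigenvalueP [v vAA v0]; have := sqnorm_ge0 (v *m conjT A).
by rewrite -qform_gram conjTK (qform_eigen vAA) pmulr_lge0 ?sqnorm_gt0 // ler0c.
Qed.

Lemma eigen_gram_le p q (A : 'M[C]_(p, q)) (lam x : R) : 0 <= lam ->
  rayleigh_bound (A *m conjT A) lam ->
  eigenvalue (conjT A *m A) x%:C%C -> x <= lam.
Proof.
move=> lam_ge0 bnd /eigenvalueP [v vAA v0]; set u := v *m conjT A.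
have [u0|u_neq0] := eqVneq u 0.
  have /eqP : x%:C%C *: v = 0 by rewrite -vAA mulmxA -/u u0 mul0mx.
  by rewrite scalemx_eq0 (negbTE v0) orbF => /eqP /(congr1 (@complex.Re R)) /= ->.
have uAA : u *m (A *m conjT A) = x%:C%C *: u.
  by rewrite /u !mulmxA -(mulmxA v) vAA scalemxAl.
by have := bnd u; rewrite (qform_eigen uAA) ler_pM2r ?sqnorm_gt0 // lecR.
Qed.

Lemma sigma_max_le p q (A : 'M[C]_(p, q)) (lam : R) : 0 <= lam ->
  rayleigh_bound (A *m conjT A) lam -> sigma_max A <= Num.sqrt lam.
Proof.
move=> lam_ge0 bnd; rewrite ler_wsqrtr //.
by apply: sup_le => // x; apply: eigen_gram_le.
Qed.

Lemma sigma_max_top_eigen p q (A : 'M[C]_(p, q)) (lam : R) : 0 <= lam ->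
  rayleigh_bound (A *m conjT A) lam ->
  (exists2 u : 'rV[C]_p, u != 0 & u *m (A *m conjT A) = lam%:C%C *: u) ->
  sigma_max A = Num.sqrt lam.
Proof.
move=> lam_ge0 bnd [u u0 uAA]; congr Num.sqrt.
apply: sup_nonneg_max => // [x xE|lam_gt0].
  by rewrite (eigen_gram_ge0 xE) (eigen_gram_le lam_ge0 bnd xE).
apply/eigenvalueP; exists (u *m A).
  by rewrite !mulmxA -(mulmxA u) uAA scalemxAl.
apply: contraTneq lam_gt0 => uA0.
have /eqP : lam%:C%C *: u = 0 by rewrite -uAA mulmxA uA0 mul0mx.
rewrite scalemx_eq0 (negbTE u0) orbF => /eqP /(congr1 (@complex.Re R)) /= ->.
by rewrite ltxx.
Qed.

(* If [v K^2 = s^2 v], then [t := v K + s v] satisfies [t K = s t]: either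
   [t != 0] and [s <= lam] by the Rayleigh bound, or [v K = - s v], which the
   positivity of [K] only allows for [s = 0]. *)
Lemma eigen_sqr_gram_le n p (Y : 'M[C]_(n, p)) (lam x : R) :
  rayleigh_bound (Y *m conjT Y) lam ->
  eigenvalue ((Y *m conjT Y) *m (Y *m conjT Y)) x%:C%C -> x <= lam ^+ 2.
Proof.
set K := Y *m conjT Y => bnd xE.
have x_ge0 : 0 <= x by apply: (@eigen_gram_ge0 _ _ K); rewrite conjT_gram.
case/eigenvalueP: xE => v vKK v0; set s := Num.sqrt x.
have s_ge0 : 0 <= s by apply: sqrtr_ge0.
have xE : x%:C%C = s%:C%C * s%:C%C by rewrite -rmorphM -expr2 sqr_sqrtr.
set t := v *m K + s%:C%C *: v.
have [t0|t_neq0] := eqVneq t 0.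
  have vK : v *m K = - s%:C%C *: v by apply/eqP; rewrite scaleNr -addr_eq0 -/t t0.
  have := sqnorm_ge0 (v *m Y); rewrite -qform_gram -/K (qform_eigen vK).
  rewrite mulNr oppr_ge0 pmulr_lle0 ?sqnorm_gt0 // lecR => s_le0.
  have s0 : s = 0 by apply/le_anti; rewrite s_le0 s_ge0.
  by rewrite -(sqr_sqrtr x_ge0) -/s s0 expr0n sqr_ge0.
have tK : t *m K = s%:C%C *: t.
  by rewrite /t mulmxDl -mulmxA vKK -scalemxAl scalerDr scalerA -xE addrC.
have := bnd t; rewrite (qform_eigen tK) ler_pM2r ?sqnorm_gt0 // lecR => s_le.
by rewrite -(sqr_sqrtr x_ge0) -/s lerXn2r // nnegrE (le_trans s_ge0).
Qed.

Lemma sigma_max_gram n p (Y : 'M[C]_(n, p)) (lam : R) : 0 <= lam ->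
  rayleigh_bound (Y *m conjT Y) lam ->
  (exists2 u : 'rV[C]_n, u != 0 & u *m (Y *m conjT Y) = lam%:C%C *: u) ->
  sigma_max (Y *m conjT Y) = lam.
Proof.
move=> lam_ge0 bnd [u u0 uK]; rewrite /sigma_max conjT_gram.
set K := Y *m conjT Y in bnd uK *.
suff -> : sup [set x : R | eigenvalue (K *m K) x%:C%C] = lam ^+ 2.
  by rewrite sqrtr_sqr ger0_norm.
apply: sup_nonneg_max => [|x xE|_]; first exact: sqr_ge0.
  rewrite (eigen_sqr_gram_le bnd xE) andbT.
  by apply: (@eigen_gram_ge0 _ _ K); rewrite conjT_gram.
apply/eigenvalueP; exists u => //.
by rewrite mulmxA uK -scalemxAl uK scalerA -rmorphM expr2.
Qed.

End SigmaMax.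

Section PositiveDefinite.
Variable R : realType.
Local Notation C := R[i].

Lemma unitmx_gram n p (Y : 'M[C]_(n, p)) : row_free Y -> Y *m conjT Y \in unitmx.
Proof.
move=> Yfree; rewrite -row_free_unit; apply: inj_row_free => v vYY.
apply/eqP; rewrite -(mulmx_free_eq0 _ Yfree) -sqnorm_eq0 -qform_gram.
by rewrite /qform vYY mul0mx mxE.
Qed.

Lemma unitmx_real_gram p q (Y : 'M[R]_(p, q)) : row_free Y -> Y *m Y^T \in unitmx.
Proof.
move=> Yfree; rewrite -(map_unitmx (real_complex R)) -[map_mx _ _]/(toC _) toC_gram.
by apply: unitmx_gram; rewrite /row_free mxrank_map.
Qed.

(* [v (L Q) = - a v] gives [(v L) Q (v L)^* = - a (v L v^* )]: a nonnegative
   number equal to a purely imaginary one, hence zero. *)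
Lemma unitmx_imaginary_add_gram_mul n p1 p2 (Y1 : 'M[C]_(n, p1))
    (Y2 : 'M[C]_(n, p2)) (om : R) :
  row_free Y1 -> row_free Y2 ->
  (0 +i* om)%C%:M + (Y1 *m conjT Y1) *m (Y2 *m conjT Y2) \in unitmx.
Proof.
set a := (0 +i* om)%C; set L := Y1 *m conjT Y1; set Q := Y2 *m conjT Y2.
move=> Y1free Y2free; rewrite -row_free_unit; apply: inj_row_free => v vH.
have vLQ : v *m L *m Q = - a *: v.
  apply/eqP; rewrite scaleNr -mulmxA -addr_eq0 addrC -mul_mx_scalar -mulmxDr.
  by rewrite vH.
have qQ : qform Q (v *m L) = - a * qform L v.
  by rewrite /qform conjT_mulmx conjT_gram vLQ -scalemxAl mulmxA mxE.
have vL0 : v *m L = 0.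
  apply/eqP; rewrite -(mulmx_free_eq0 _ Y2free) -sqnorm_eq0 -qform_gram.
  move: qQ; rewrite !qform_gram (ge0_complexE (sqnorm_ge0 (v *m Y1))).
  rewrite (ge0_complexE (sqnorm_ge0 (_ *m Y2))) => /(congr1 (@complex.Re R)) /= ->.
  by rewrite /a; simpc.
apply/eqP; rewrite -(mulmx_free_eq0 _ Y1free) -sqnorm_eq0 -qform_gram.
by rewrite /qform vL0 mul0mx mxE.
Qed.

End PositiveDefinite.

Lemma invmx_mulmx (F : fieldType) n (A B : 'M[F]_n) :
  A \in unitmx -> B \in unitmx -> invmx (A *m B) = invmx B *m invmx A.
Proof.
move=> uA uB; have uAB : A *m B \in unitmx by rewrite unitmx_mul uA uB.
have AB_inv : A *m B *m (invmx B *m invmx A) = 1%:M.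
  by rewrite mulmxA mulmxK // mulmxV.
by rewrite -[LHS]mulmx1 -AB_inv mulmxA mulVmx // mul1mx.
Qed.

Lemma unitmx_diag (F : fieldType) p (d : 'rV[F]_p) :
  (forall i, d 0 i != 0) -> diag_mx d \in unitmx.
Proof.
move=> d_neq0; rewrite unitmxE det_diag unitfE prodf_seq_neq0.
by apply/allP => i _; apply: d_neq0.
Qed.

Lemma trmx_gram (F : fieldType) p q (Y : 'M[F]_(p, q)) : (Y *m Y^T)^T = Y *m Y^T.
Proof. by rewrite trmx_mul trmxK. Qed.

Lemma diag_mx_gram (F : fieldType) p (d : 'rV[F]_p) :
  diag_mx d *m (diag_mx d)^T = diag_mx (\row_i d 0 i ^+ 2).
Proof.
by rewrite tr_diag_mx mulmx_diag; congr diag_mx; apply/rowP => i; rewrite !mxE.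
Qed.

Section StaticGram.
Variables (F : fieldType) (n : nat) (L Q : 'M[F]_n) (a b : F).
Hypotheses (uL : L \in unitmx) (uQ : Q \in unitmx) (LT : L^T = L) (QT : Q^T = Q).

Definition static_gram : 'M[F]_n :=
  a *: (invmx Q *m invmx L *m invmx Q) + b *: invmx Q.

Lemma static_gram_mulmx : static_gram *m (L *m Q)^T = a *: invmx Q + b *: L.
Proof.
rewrite trmx_mul LT QT mulmxDl -!scalemxAl !mulmxA.
by rewrite !mulmxKV // mulVmx // mul1mx.
Qed.

Lemma mulmx_static_gram : (L *m Q) *m static_gram = static_gram *m (L *m Q)^T.
Proof.
by rewrite static_gram_mulmx mulmxDr -!scalemxAr !mulmxA !mulmxK // mulmxV // mul1mx.
Qed.

Lemma static_gram_sandwich :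
  (L *m Q) *m static_gram *m (L *m Q)^T = a *: L + b *: (L *m Q *m L).
Proof. by rewrite -mulmxA static_gram_mulmx mulmxDr -!scalemxAr mulmxK. Qed.

Lemma static_gramE : static_gram =
  invmx (L *m Q) *m (a *: L + b *: (L *m Q *m L)) *m (invmx (L *m Q))^T.
Proof.
have LQ_unit : L *m Q \in unitmx by rewrite unitmx_mul uL uQ.
rewrite -static_gram_sandwich trmx_inv -[(L *m Q) *m _ *m _]mulmxA mulKmx //.
by rewrite mulmxK // unitmx_tr.
Qed.

End StaticGram.

Section Resolvent.
Variables (R : realType) (p : nat) (M K X : 'M[R]_p) (om : R).
Hypotheses (MK : M *m K = K *m M^T) (MKM : M *m K *m M^T = X).
Local Notation a := (0 +i* om)%C.
Local Notation H := (a%:M + toC M).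

Lemma resolvent_sandwich : H *m toC K *m conjT H = toC X + (om ^+ 2)%:C%C *: toC K.
Proof.
rewrite conjTD conjT_scalar conjT_toC !mulmxDl !mulmxDr !mul_scalar_mx !mul_mx_scalar.
rewrite -!scalemxAl -!toC_mulmx MKM -MK !scalerA addrA -(addrA _ (a *: _)) -scalerDl.
have -> : a + Num.conj a = 0 by simpc.
have -> : Num.conj a * a = (om ^+ 2)%:C%C by simpc; rewrite expr2.
by rewrite scale0r addr0 addrC.
Qed.

Hypothesis uH : H \in unitmx.

Lemma resolvent_lyapunov : toC K =
  invmx H *m toC X *m conjT (invmx H)
  + (om ^+ 2)%:C%C *: (invmx H *m toC K *m conjT (invmx H)).
Proof.
rewrite scalemxAl scalemxAr -mulmxDl -mulmxDr -resolvent_sandwich.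
rewrite !mulmxA mulVmx // mul1mx -!mulmxA -conjT_mulmx mulVmx //.
by rewrite conjT_scalar rmorph1 mulmx1.
Qed.

End Resolvent.

Lemma mulmx_incidence (R : realType) n m (src dst : 'I_m -> 'I_n)
    (y : 'rV[R]_n) (l : 'I_m) :
  (y *m incidence R src dst) 0 l = y 0 (src l) - y 0 (dst l).
Proof.
rewrite mxE; under eq_bigr do rewrite mxE mulrBr !mulr_natr !mulrb.
by rewrite sumrB -!big_mkcond !big_pred1_eq.
Qed.

Section SpanningTree.
Variables (R : realType) (k c : nat) (src dst : 'I_(k + c) -> 'I_k.+1).
Hypothesis tree_connected : connected_in src dst [pred l : 'I_(k + c) | (l < k)%N].

Lemma mulmx_Dtau (y : 'rV[R]_k.+1) (j : 'I_k) :
  (y *m Dtau R src dst) 0 j = y 0 (src (lshift c j)) - y 0 (dst (lshift c j)).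
Proof. by rewrite mulmx_lsub mxE mulmx_incidence. Qed.

Lemma Dtau_left_kernel_const (y : 'rV[R]_k.+1) :
  y *m Dtau R src dst = 0 -> forall x, y 0 x = y 0 0.
Proof.
move=> yD0.
have edge (l : 'I_(k + c)) : (l < k)%N -> y 0 (src l) = y 0 (dst l).
  move=> lk; have -> : l = lshift c (Ordinal lk) by apply: val_inj.
  by apply/eqP; rewrite -subr_eq0 -mulmx_Dtau yD0 mxE.
have adj_eq a b : connect (adj_in src dst [pred l : 'I_(k + c) | (l < k)%N]) a b ->
    y 0 a = y 0 b.
  move=> /connectP [s + ->]; elim: s a => [|z s IHs] a //= /andP [/existsP [l] + /IHs <-].
  by case/andP=> lk /orP [] /andP [/eqP <- /eqP <-]; rewrite edge.
by move=> x; apply/adj_eq/tree_connected.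
Qed.

Lemma row_free_trDtau : row_free (Dtau R src dst)^T.
Proof.
set D := Dtau R src dst.
have ker_const : (kermx D <= (const_mx 1 : 'rV[R]_k.+1))%MS.
  apply/row_subP => i; have /sub_kermxP yD0 := row_sub i (kermx D).
  rewrite (_ : row i _ = row i (kermx D) 0 0 *: const_mx 1) ?scalemx_sub //.
  by apply/rowP => x; rewrite (Dtau_left_kernel_const yD0 x) !mxE mulr1.
have := mxrankS ker_const; rewrite mxrank_ker.
have := rank_leq_row (const_mx 1 : 'rV[R]_k.+1); have := rank_leq_col D.
by rewrite /row_free mxrank_tr; lia.
Qed.

End SpanningTree.

Section Network.
Variables (R : realType) (k c : nat) (src dst : 'I_(k + c) -> 'I_k.+1).
Variables (w : 'I_(k + c) -> R) (eps : 'I_k.+1 -> R).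
Hypothesis tree_connected : connected_in src dst [pred l : 'I_(k + c) | (l < k)%N].
Hypotheses (w_gt0 : forall l, 0 < w l) (eps_gt0 : forall i, 0 < eps i).
Variables sw sv : R.

Local Notation Dt := (Dtau R src dst).
Local Notation Rr := (Rm R src dst).
Local Notation L := (Les src dst eps).
Local Notation W := (Wm w).
Local Notation Wh := (Whalf w).
Local Notation Eh := (Einvhalf eps).

Definition Qmx : 'M[R]_k := Rr *m W *m Rr^T.
Definition Mmx : 'M[R]_k := L *m Rr *m W *m Rr^T.
Definition Bmx : 'M[R]_(k, k.+1 + (k + c)) :=
  row_mx (sw *: (Dt^T *m Eh)) (- (sv *: (L *m Rr *m Wh))).
Definition Kmx : 'M[R]_k := static_gram L Qmx (sw ^+ 2) (sv ^+ 2).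

Lemma Les_gram : L = (Dt^T *m Eh) *m (Dt^T *m Eh)^T.
Proof.
rewrite trmx_mul trmxK !mulmxA -(mulmxA _ Eh) diag_mx_gram; congr (_ *m diag_mx _ *m _).
by apply/rowP => i; rewrite !mxE exprVn sqr_sqrtr // ltW.
Qed.

Lemma Qmx_gram : Qmx = (Rr *m Wh) *m (Rr *m Wh)^T.
Proof.
rewrite trmx_mul !mulmxA -(mulmxA _ Wh) diag_mx_gram; congr (_ *m diag_mx _ *m _).
by apply/rowP => l; rewrite !mxE sqr_sqrtr // ltW.
Qed.

Lemma row_free_Les_factor : row_free (Dt^T *m Eh).
Proof.
have Eh_unit : Eh \in unitmx.
  by apply: unitmx_diag => i; rewrite mxE invr_eq0 gt_eqF // sqrtr_gt0.
by rewrite /row_free mxrankMfree ?row_free_unit //; apply: row_free_trDtau.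
Qed.

Lemma row_free_Qmx_factor : row_free (Rr *m Wh).
Proof.
have Wh_unit : Wh \in unitmx.
  by apply: unitmx_diag => l; rewrite mxE gt_eqF // sqrtr_gt0.
rewrite /row_free mxrankMfree ?row_free_unit //.
apply: inj_row_free => v; rewrite mul_mx_row mulmx1 => /eqP.
by rewrite row_mx_eq0 => /andP [/eqP -> _].
Qed.

Let L_unit : L \in unitmx.
Proof. by rewrite Les_gram unitmx_real_gram ?row_free_Les_factor. Qed.
Let Q_unit : Qmx \in unitmx.
Proof. by rewrite Qmx_gram unitmx_real_gram ?row_free_Qmx_factor. Qed.
Let L_sym : L^T = L.
Proof. by rewrite Les_gram trmx_gram. Qed.
Let Q_sym : Qmx^T = Qmx.
Proof. by rewrite Qmx_gram trmx_gram. Qed.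

Lemma MmxE : Mmx = L *m Qmx.
Proof. by rewrite /Mmx /Qmx !mulmxA. Qed.

Lemma Bmx_gram : Bmx *m Bmx^T = sw ^+ 2 *: L + sv ^+ 2 *: (L *m Qmx *m L).
Proof.
rewrite tr_row_mx mul_row_col linearN /= mulNmx mulmxN opprK !linearZ /=.
rewrite -!scalemxAl !scalerA -!expr2 -Les_gram.
rewrite Qmx_gram [(L *m _ *m _)^T]trmx_mul [(L *m _)^T]trmx_mul.
by rewrite [(Rr *m _)^T]trmx_mul L_sym !mulmxA.
Qed.

Lemma Zm_static_gram : Zm src dst w eps sw sv = Rr^T *m Kmx *m Rr.
Proof.
rewrite /Zm /Kmx /static_gram -/Qmx.
have -> : Rr *m W *m Rr^T *m L *m Rr *m W *m Rr^T = Qmx *m L *m Qmx.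
  by rewrite /Qmx !mulmxA.
rewrite !invmx_mulmx ?unitmx_mul ?L_unit ?Q_unit // mulmxA.
by rewrite mulmxDr mulmxDl -!scalemxAr -!scalemxAl !mulmxA.
Qed.

Lemma Kmx_comm : Mmx *m Kmx = Kmx *m Mmx^T.
Proof. by rewrite MmxE (mulmx_static_gram _ _ L_unit Q_unit L_sym Q_sym). Qed.

Lemma Kmx_sandwich : Mmx *m Kmx *m Mmx^T = Bmx *m Bmx^T.
Proof. by rewrite MmxE (static_gram_sandwich _ _ L_unit Q_unit L_sym Q_sym) Bmx_gram. Qed.

Lemma Kmx_gram : Kmx = (invmx Mmx *m Bmx) *m (invmx Mmx *m Bmx)^T.
Proof.
by rewrite /Kmx (static_gramE _ _ L_unit Q_unit L_sym Q_sym) -Bmx_gram -MmxE trmx_mul !mulmxA.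
Qed.

Local Notation H om := ((0 +i* om)%C%:M + toC Mmx).

Lemma unitmx_resolvent (om : R) : H om \in unitmx.
Proof.
rewrite MmxE toC_mulmx Les_gram Qmx_gram !toC_gram.
apply: unitmx_imaginary_add_gram_mul; rewrite /row_free mxrank_map.
  exact: row_free_Les_factor.
exact: row_free_Qmx_factor.
Qed.

Lemma Sigma_tilde_resolvent (om : R) :
  Sigma_tilde src dst w eps sw sv (0 +i* om)%C = toC Rr^T *m invmx (H om) *m toC Bmx.
Proof. by rewrite /Sigma_tilde /Bmx /toC map_row_mx. Qed.

Definition Nmx (om : R) := toC Rr^T *m invmx (H om) *m toC (invmx Mmx *m Bmx).

Lemma Zm_decomposition (om : R) :
  let S := Sigma_tilde src dst w eps sw sv (0 +i* om)%C in
  toC (Zm src dst w eps sw sv) = S *m conjT S + (om ^+ 2)%:C%C *: (Nmx om *m conjT (Nmx om)).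
Proof.
rewrite /= Zm_static_gram !toC_mulmx.
rewrite (resolvent_lyapunov Kmx_comm Kmx_sandwich (unitmx_resolvent om)).
rewrite Kmx_gram !toC_gram Sigma_tilde_resolvent /Nmx !conjT_mulmx (conjT_toC Rr^T) trmxK.
by rewrite mulmxDr mulmxDl -scalemxAr -scalemxAl !mulmxA.
Qed.

End Network.

Theorem theorem1 (R : realType) (k c : nat) (hk : (1 <= k)%N)
  (src dst : 'I_(k + c) -> 'I_k.+1)
  (hloop : no_self_loops src dst) (hdist : distinct_edges src dst)
  (hconn : connected_in src dst predT)
  (htree : spanning_tree src dst [pred l : 'I_(k + c) | (l < k)%N])
  (w : 'I_(k + c) -> R) (hw : forall l, 0 < w l)
  (eps : 'I_k.+1 -> R) (heps : forall i, 0 < eps i)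
  (sw sv : R) :
  hinf_norm (Sigma_tilde src dst w eps sw sv) ^+ 2
  = sigma_max_real (Zm src dst w eps sw sv).
Proof.
have [tree_connected _] := htree.
have Zdec := Zm_decomposition tree_connected hw heps sw sv.
set Sigma := Sigma_tilde src dst w eps sw sv in Zdec *.
set S0 := Sigma (0 +i* 0)%C.
have Z0 : toC (Zm src dst w eps sw sv) = S0 *m conjT S0.
  by rewrite (Zdec 0) expr0n /= rmorph0 scale0r addr0.
have [lam [lam_ge0 bnd top]] := gram_top_eigen S0 (leq_trans hk (leq_addr c k)).
have bnd_om om : rayleigh_bound (Sigma (0 +i* om)%C *m conjT (Sigma (0 +i* om)%C)) lam.
  move=> u; apply: le_trans (bnd u); rewrite -Z0 (Zdec om) qformDZ lerDl.
  by rewrite mulr_ge0 ?qform_gram ?sqnorm_ge0 // ler0c sqr_ge0.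
have -> : hinf_norm Sigma = Num.sqrt lam.
  apply: sup_max => [|_ [om _ <-]]; last exact: sigma_max_le lam_ge0 (bnd_om om).
  by exists 0 => [|]; last exact: sigma_max_top_eigen lam_ge0 (bnd_om 0) top.
rewrite sqr_sqrtr // /sigma_max_real -[map_mx _ _]/(toC _) Z0.
by rewrite (sigma_max_gram lam_ge0 bnd top).
Qed.
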